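(* Let $K\subseteq\mathbb{C}$ be a field containing all roots of unity. Suppose $\{a_1,\dots,a_r\}\subseteq K^{\times}$ is simple in $K$, and $b_1,\dots,b_r$ are elements of an extension field of $K$ such that the multiplicative subgroup $\langle b_1,\dots,b_r\rangle$ contains $\langle a_1,\dots,a_r\rangle$. Then $\{b_1,\dots,b_r\}$ is simple in $K(b_1,\dots,b_r)$.
   Context: For a field $E$, a tuple $\{c_1,\dots,c_k\}\subseteq E^{\times}$ is simple in $E$ if it is multiplicatively independent ($c_1^{n_1}\cdots c_k^{n_k}=1$ with $n_i\in\mathbb{Z}$ only if all $n_i=0$) and the subgroup $\langle c_1,\dots,c_k\rangle$ is pure in $E^{\times}$ (whenever $x^n=c$, $c\in\langle c_1,\dots,c_k\rangle$, $n\ge1$, has a solution in $E^\times$, it has one in $\langle c_1,\dots,c_k\rangle$). *)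

From mathcomp Require Import all_boot all_algebra.
From mathcomp Require Import Rstruct.
From mathcomp.real_closed Require Import complex.

Set Implicit Arguments.
Unset Strict Implicit.
Unset Printing Implicit Defensive.
Import GRing.Theory.
Local Open Scope ring_scope.

Definition CC : numClosedFieldType := (Rdefinitions.R)[i].

Definition in_mgroup (F : fieldType) (r : nat) (c : 'I_r -> F) (x : F) : Prop :=
  exists n : 'I_r -> int, x = \prod_(i < r) (c i) ^ (n i).

Definition mult_indep (F : fieldType) (r : nat) (c : 'I_r -> F) : Prop :=
  forall n : 'I_r -> int, \prod_(i < r) (c i) ^ (n i) = 1 -> forall i, n i = 0.

Definition simple_in (F : fieldType) (E : F -> Prop) (r : nat) (c : 'I_r -> F) : Prop :=
  [/\ forall i, E (c i) /\ c i != 0,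
      mult_indep c &
      forall (x y : F) (n : nat), (0 < n)%N -> E y -> y != 0 ->
        y ^+ n = x -> in_mgroup c x ->
        exists2 z, in_mgroup c z & z ^+ n = x].

Definition is_subfield (F : fieldType) (S : F -> Prop) : Prop :=
  [/\ S 0, S 1,
      forall x y, S x -> S y -> S (x - y),
      forall x y, S x -> S y -> S (x * y) &
      forall x, S x -> S x^-1].

(* K(b_1..b_r) inside L, where K is embedded in L by j: the smallest subfield
   of L containing j(K) and the b_i *)
Definition adjoin (K L : fieldType) (j : {rmorphism K -> L}) (r : nat)
    (b : 'I_r -> L) (x : L) : Prop :=
  forall S : L -> Prop, is_subfield S -> (forall k, S (j k)) ->
    (forall i, S (b i)) -> S x.

From HB Require Import structures.
From mathcomp Require Import all_boot all_algebra.
From mathcomp Require Import Rstruct.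
From mathcomp.real_closed Require Import complex.
From mathcomp Require Import boolp classical_sets ring.

(* Write j(a_i) = prod_k b_k^(M_ik) with M an integer matrix. Independence of
   the a_i forces det M <> 0, and then, via the adjugate of M, the b_k are
   independent and b_k^|det M| lies in j<a>, a subgroup that is pure in j(K).

   Starting from (E, G) = (j(K), j<a>), repeatedly adjoin to E a q-th root β
   (q prime) of an element of G, keeping G pure in E, until G contains every
   b_k. If β ∈ E, purity of G and torsion-freeness of <b> already put β in G.
   Otherwise X^q - β^q is irreducible over E: a monic factor of degree
   0 < d < q has constant term a root of unity times β^d, which would put β in
   E. Let y ∈ E(β) with y^n ∈ G β^N, and ζ ∈ E a primitive q-th root of unity.
   The conjugation β ↦ ζβ multiplies y by a root of unity, which lies in E;
   comparing coordinates in the basis 1, β, ..., β^(q-1) shows that y = e β^k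
   with e ∈ E. Then e^n ∈ G, and purity of G in E gives an n-th root of y^n
   in G β^N. In the end E contains K(b) and G = <b>. *)

Set Implicit Arguments.
Unset Strict Implicit.
Unset Printing Implicit Defensive.
Import GRing.Theory.
Local Open Scope ring_scope.

Section PowerProducts.
Variables (F : fieldType) (r : nat).
Implicit Types (c : 'I_r -> F) (v : 'rV[int]_r).

Definition mpow c v : F := \prod_i c i ^ v 0 i.

Lemma in_mgroupE c x : in_mgroup c x <-> exists v, x = mpow c v.
Proof.
split=> [[n ->]|[v ->]]; last by exists (v 0).
by exists (\row_i n i); apply: eq_bigr => i _; rewrite mxE.
Qed.

Lemma mult_indepE c : mult_indep c <-> forall v, mpow c v = 1 -> v = 0.
Proof.
split=> [indep_c v /indep_c v0 | indep_c n n1 i].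
  by apply/rowP => i; rewrite mxE v0.
have /indep_c/rowP/(_ i) : mpow c (\row_i n i) = 1.
  by rewrite -n1; apply: eq_bigr => k _; rewrite mxE.
by rewrite !mxE.
Qed.

Lemma mpow0 c : mpow c 0 = 1.
Proof. by apply: big1 => i _; rewrite mxE expr0z. Qed.

Lemma mpow_delta c i : mpow c (delta_mx 0 i) = c i.
Proof.
rewrite /mpow (bigD1 i) //= big1 => [|k /negPf ki]; last by rewrite mxE ki andbF.
by rewrite mxE !eqxx mulr1.
Qed.

Lemma mpowD c u v : (forall i, c i != 0) -> mpow c (u + v) = mpow c u * mpow c v.
Proof. by move=> c0; rewrite -big_split; apply: eq_bigr => i _; rewrite mxE expfzDr. Qed.

Lemma mpowZ c k v : mpow c (k *: v) = mpow c v ^ k.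
Proof.
rewrite /mpow (big_morph (fun x : F => x ^ k) (fun x y => expfzMl x y k) (exp1rz _ k)).
by apply: eq_bigr => i _; rewrite mxE exprz_exp mulrC.
Qed.

Lemma mpow_mulmx c v (M : 'M[int]_r) : (forall i, c i != 0) ->
  mpow c (v *m M) = mpow (fun i => mpow c (row i M)) v.
Proof.
move=> c0; rewrite /mpow; under [RHS]eq_bigr => i _ do rewrite -mpowZ.
rewrite exchange_big /=; apply: eq_bigr => k _.
rewrite mxE (big_morph (fun m => c k ^ m) (fun m n => expfzDr m n (c0 k)) (expr0z _)).
by apply: eq_bigr => i _; rewrite !mxE mulrC.
Qed.

End PowerProducts.

Lemma rmorph_mpow (K L : fieldType) (j : {rmorphism K -> L}) r (c : 'I_r -> K) v :
  j (mpow c v) = mpow (j \o c) v.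
Proof. by rewrite rmorph_prod; apply: eq_bigr => i _; rewrite fmorphXz. Qed.

Section MulSubgroups.
Variable L : fieldType.
Implicit Types (E G : L -> Prop) (x y : L).

Definition mul_subgroup G :=
  [/\ G 1, forall x y, G x -> G y -> G (x * y) & forall x, G x -> G x^-1].

Definition pure_in E G :=
  forall x y n, (0 < n)%N -> E y -> y != 0 -> y ^+ n = x -> G x ->
  exists2 z, G z & z ^+ n = x.

Lemma subfield_mul_subgroup E : is_subfield E -> mul_subgroup E.
Proof. by case. Qed.

Lemma subfield_units_subgroup E : is_subfield E -> mul_subgroup (fun x => E x /\ x != 0).
Proof.
case=> _ E1 _ EM EV; split; first by rewrite oner_neq0.
  by move=> x y [Ex x0] [Ey y0]; rewrite mulf_neq0 //; split; first exact: EM.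
by move=> x [Ex x0]; rewrite invr_neq0 //; split; first exact: EV.
Qed.

Lemma mul_subgroupX G x n : mul_subgroup G -> G x -> G (x ^+ n).
Proof. by case=> G1 GM _ Gx; elim: n => [|n IHn]; rewrite ?expr0 // exprS; apply: GM. Qed.

Lemma mul_subgroupXz G x (n : int) : mul_subgroup G -> G x -> G (x ^ n).
Proof.
move=> HG Gx; case: n => n; first exact: (mul_subgroupX n HG Gx).
by case: (HG) => _ _; apply; apply: mul_subgroupX.
Qed.

Lemma mul_subgroupXabs G x (n : int) : mul_subgroup G -> G (x ^ n) -> G (x ^+ `|n|).
Proof. by case=> _ _ GV; case: n => n // /GV; rewrite invrK. Qed.

Lemma subfield_unity_root E n w x :
  is_subfield E -> E w -> n.-primitive_root w -> x ^+ n = 1 -> E x.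
Proof.
move=> /subfield_mul_subgroup HE Ew w_prim /(prim_rootP w_prim)[i ->].
exact: mul_subgroupX.
Qed.

Lemma subfield_expr_dvd E β q u : is_subfield E -> prime q -> ~ E β ->
  E (β ^+ q) -> E (β ^+ u) -> (q %| u)%N.
Proof.
move=> HE q_prime Eβ_N Eβq Eβu; apply/negPn/negP => q_ndvd_u.
have [E0 _ _ EM EV] := HE.
have β_neq0 : β != 0 by apply: contra_notN Eβ_N => /eqP ->.
have [k _] := Bezoutl u (prime_gt0 q_prime).
rewrite (eqP (_ : coprime q u)) ?prime_coprime // => /dvdnP[c kuE].
apply: Eβ_N; have -> : β = (β ^+ q) ^+ c / (β ^+ u) ^+ k.
  by rewrite -!exprM [(q * c)%N]mulnC -kuE add1n exprS mulnC mulfK // expf_neq0.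
have EX y m : E y -> E (y ^+ m) by apply: mul_subgroupX; apply: subfield_mul_subgroup.
by apply: EM; [apply: EX | apply/EV/EX].
Qed.

Lemma in_mgroup_gen r (c : 'I_r -> L) i : in_mgroup c (c i).
Proof. by apply/in_mgroupE; exists (delta_mx 0 i); rewrite mpow_delta. Qed.

Lemma in_mgroup_min r (c : 'I_r -> L) G x :
  mul_subgroup G -> (forall i, G (c i)) -> in_mgroup c x -> G x.
Proof.
move=> HG Gc [n ->]; have [G1 GM _] := HG.
by apply: big_ind => // i _; apply: mul_subgroupXz.
Qed.

Lemma in_mgroup_neq0 r (c : 'I_r -> L) x :
  (forall i, c i != 0) -> in_mgroup c x -> x != 0.
Proof. by move=> c0 [n ->]; apply/prodf_neq0 => i _; apply: expfz_neq0. Qed.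

Lemma in_mgroup_subgroup r (c : 'I_r -> L) :
  (forall i, c i != 0) -> mul_subgroup (in_mgroup c).
Proof.
move=> c0; split; first by apply/in_mgroupE; exists 0; rewrite mpow0.
  move=> _ _ /in_mgroupE[u ->] /in_mgroupE[v ->].
  by apply/in_mgroupE; exists (u + v); rewrite mpowD.
by move=> _ /in_mgroupE[v ->]; apply/in_mgroupE; exists (-1 *: v); rewrite mpowZ exprN1.
Qed.

Lemma in_mgroup_torsionfree r (c : 'I_r -> L) x n :
  mult_indep c -> in_mgroup c x -> (0 < n)%N -> x ^+ n = 1 -> x = 1.
Proof.
move=> /mult_indepE c_indep /in_mgroupE[v ->] n_gt0.
rewrite -[_ ^+ n]/(_ ^ n%:Z) -mpowZ => /c_indep/eqP.
by rewrite scalemx_eq0 eqz_nat eqn0Ngt n_gt0 => /eqP ->; rewrite mpow0.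
Qed.

Definition mul_adjoin G β x := exists g t, G g /\ x = g * β ^+ t.

Lemma mul_adjoin_sub G β x : G x -> mul_adjoin G β x.
Proof. by move=> Gx; exists x, 0%N; rewrite mulr1. Qed.

Lemma mul_adjoin_root G β : G 1 -> mul_adjoin G β β.
Proof. by move=> G1; exists 1, 1%N; rewrite mul1r expr1. Qed.

Lemma mul_adjoin_min G β H x : mul_subgroup H -> (forall y, G y -> H y) -> H β ->
  mul_adjoin G β x -> H x.
Proof.
move=> HH GH Hβ [g [t [Gg ->]]]; have [_ HM _] := HH.
by apply: HM; [apply: GH | apply: mul_subgroupX].
Qed.

Lemma mul_adjoin_subgroup G β q : mul_subgroup G -> β != 0 -> (0 < q)%N ->
  G (β ^+ q) -> mul_subgroup (mul_adjoin G β).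
Proof.
move=> HG β_neq0 q_gt0 Gβq; have [G1 GM GV] := HG.
split; first exact: mul_adjoin_sub.
  move=> _ _ [g [t [Gg ->]]] [g' [t' [Gg' ->]]]; exists (g * g'), (t + t')%N.
  by split; [exact: GM | rewrite exprD mulrACA].
move=> _ [g [t [Gg ->]]]; exists (g^-1 * (β ^+ q) ^- t), (t * q.-1)%N; split.
  by apply: GM; apply: GV => //; apply: mul_subgroupX.
have -> : (β ^+ q) ^+ t = β ^+ (t * q.-1) * β ^+ t.
  by rewrite -exprD -mulnSr prednK // mulnC exprM.
rewrite invfM -mulrA; congr (_ * _).
by rewrite invfM mulrAC mulVf ?mul1r // expf_neq0.
Qed.

End MulSubgroups.

Section RangeOfMorphism.
Local Open Scope classical_set_scope.
Variables (K L : fieldType) (j : {rmorphism K -> L}).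

Lemma range_subfield : is_subfield (range j).
Proof.
split; first by exists 0 => //; rewrite rmorph0.
- by exists 1 => //; rewrite rmorph1.
- by move=> _ _ [x _ <-] [y _ <-]; exists (x - y) => //; rewrite rmorphB.
- by move=> _ _ [x _ <-] [y _ <-]; exists (x * y) => //; rewrite rmorphM.
by move=> _ [x _ <-]; exists x^-1 => //; rewrite fmorphV.
Qed.

Lemma image_mul_subgroup (G : K -> Prop) : mul_subgroup G -> mul_subgroup (j @` G).
Proof.
case=> G1 GM GV; split; first by exists 1 => //; rewrite rmorph1.
  by move=> _ _ [x Gx <-] [y Gy <-]; exists (x * y); rewrite ?rmorphM //; apply: GM.
by move=> _ [x Gx <-]; exists x^-1; rewrite ?fmorphV //; apply: GV.
Qed.

Lemma image_pure (G : K -> Prop) : pure_in setT G -> pure_in (range j) (j @` G).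
Proof.
move=> G_pure _ _ n n_gt0 [k _ <-] k_neq0 <- [x Gx jx].
have kx : k ^+ n = x by apply: (fmorph_inj j); rewrite rmorphXn jx.
rewrite fmorph_eq0 in k_neq0.
have [z Gz zn] := G_pure x k n n_gt0 I k_neq0 kx Gx.
by exists (j z); [exists z | rewrite -rmorphXn zn].
Qed.

End RangeOfMorphism.

Lemma in_mgroup_image_matrix (K L : fieldType) (j : {rmorphism K -> L}) r
    (a : 'I_r -> K) (b : 'I_r -> L) :
  (forall x, in_mgroup a x -> in_mgroup b (j x)) ->
  exists M : 'M[int]_r, forall i, j (a i) = mpow b (row i M).
Proof.
move=> sub_ab.
have /fin_all_exists[M jaM] : forall i, exists v, j (a i) = mpow b v.
  by move=> i; apply/in_mgroupE/sub_ab/in_mgroupE; exists (delta_mx 0 i); rewrite mpow_delta.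
by exists (\matrix_i M i) => i; rewrite jaM rowK.
Qed.

Section ImageMatrix.
Variables (K L : fieldType) (j : {rmorphism K -> L}) (r : nat).
Variables (a : 'I_r -> K) (b : 'I_r -> L) (M : 'M[int]_r).
Hypotheses (b_neq0 : forall i, b i != 0) (a_indep : mult_indep a).
Hypothesis jaM : forall i, j (a i) = mpow b (row i M).

Lemma rmorph_mpow_matrix v : j (mpow a v) = mpow b (v *m M).
Proof. by rewrite rmorph_mpow mpow_mulmx //; apply: eq_bigr => i _; rewrite /= jaM. Qed.

Lemma mpow_matrix_eq1 v : mpow b (v *m M) = 1 -> v = 0.
Proof.
rewrite -rmorph_mpow_matrix => /eqP; rewrite fmorph_eq1 => /eqP.
exact: (mult_indepE a).1 a_indep v.
Qed.

Lemma det_matrix_neq0 : \det M != 0.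
Proof.
apply/det0P => -[v /eqP v_neq0 vM0]; apply: v_neq0.
by apply: mpow_matrix_eq1; rewrite vM0 mpow0.
Qed.

Lemma mpow_matrix_adj v : mpow b (v *m \adj M *m M) = mpow b v ^ \det M.
Proof. by rewrite -mulmxA mul_adj_mx mul_mx_scalar mpowZ. Qed.

Lemma mult_indep_image : mult_indep b.
Proof.
apply/mult_indepE => v bv1.
have /mpow_matrix_eq1 adj_v0 : mpow b (v *m \adj M *m M) = 1.
  by rewrite mpow_matrix_adj bv1 exp1rz.
have /eqP : \det M *: v = 0 by rewrite -mul_mx_scalar -mul_adj_mx mulmxA adj_v0 mul0mx.
by rewrite scalemx_eq0 (negPf det_matrix_neq0) => /eqP.
Qed.

Lemma expr_det_in_image : (forall i, a i != 0) ->
  forall i, (j @` in_mgroup a)%classic (b i ^+ `|\det M|).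
Proof.
move=> a_neq0 i; apply: mul_subgroupXabs (image_mul_subgroup j (in_mgroup_subgroup a_neq0)) _.
exists (mpow a (delta_mx 0 i *m \adj M)); first by apply/in_mgroupE; eexists.
by rewrite rmorph_mpow_matrix mpow_matrix_adj mpow_delta.
Qed.

End ImageMatrix.

Section SubfieldType.
Variables (L : fieldType) (E : L -> Prop) (HE : is_subfield E).

(* The dummy [let] makes the predicate mention [HE], so that the canonical
   field structure declared below can be found from the predicate alone. *)
Definition subfield_pred : pred L := fun x => let _ := HE in `[< E x >].

Lemma subfield_predP x : reflect (E x) (x \in subfield_pred).
Proof. exact: (iffP (asboolP _)). Qed.

Lemma subfield_pred_divring_closed : divring_closed subfield_pred.
Proof.
case: HE => E0 E1 EB EM EV; split; first exact/subfield_predP.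
  by move=> x y /subfield_predP Ex /subfield_predP Ey; apply/subfield_predP/EB.
by move=> x y /subfield_predP Ex /subfield_predP Ey; apply/subfield_predP/EM/EV.
Qed.

HB.instance Definition _ :=
  GRing.isDivringClosed.Build L subfield_pred subfield_pred_divring_closed.

Record subfield_type := SubfieldElt {
  subfield_val : L;
  subfield_valP : subfield_val \in subfield_pred }.

HB.instance Definition _ := [isSub for subfield_val].
HB.instance Definition _ := [Choice of subfield_type by <:].
HB.instance Definition _ := [SubChoice_isSubIntegralDomain of subfield_type by <:].
HB.instance Definition _ := [SubIntegralDomain_isSubField of subfield_type by <:].

Implicit Types p : {poly subfield_type}.

Definition in_subfield x (Ex : E x) : subfield_type :=
  SubfieldElt (introT (subfield_predP x) Ex).

Lemma subfield_mem (a : subfield_type) : E (val a).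
Proof. exact/subfield_predP/subfield_valP. Qed.

Definition peval x p : L := (map_poly val p).[x].

HB.instance Definition _ x := GRing.RMorphism.copy (peval x)
  (horner_morph (fun a : subfield_type => mulrC x (val a))).

Lemma pevalC x a : peval x a%:P = val a.
Proof. by rewrite /peval map_polyC hornerC. Qed.

Lemma pevalX x : peval x 'X = x.
Proof. by rewrite /peval map_polyX hornerX. Qed.

(* [rmorphB] applies too, but inferring its structure on [peval x] is very slow. *)
Lemma pevalB x p p' : peval x (p - p') = peval x p - peval x p'.
Proof. by rewrite /peval rmorphB hornerD hornerN. Qed.

Lemma peval_sum x n p :
  (size p <= n)%N -> peval x p = \sum_(i < n) val p`_i * x ^+ i.
Proof.
move=> p_small; rewrite /peval (@horner_coef_wide _ n) ?size_map_poly //.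
by apply: eq_bigr => i _; rewrite coef_map.
Qed.

End SubfieldType.

Section Kummer.
Variables (L : fieldType) (E : L -> Prop) (HE : is_subfield E).
Variables (q : nat) (ζ β : L).
Hypotheses (q_prime : prime q) (ζ_prim : q.-primitive_root ζ) (Eζ : E ζ).
Hypotheses (Eβq : E (β ^+ q)) (Eβ_N : ~ E β).

Local Notation F := (subfield_type HE).
Implicit Types p d : {poly F}.

Let q_gt0 : (0 < q)%N := prime_gt0 q_prime.

Lemma kummer_root_neq0 : β != 0.
Proof. by apply: contra_notN Eβ_N => /eqP ->; case: HE. Qed.

Definition kummer_poly : {poly F} := 'X^q - (in_subfield HE Eβq)%:P.

Lemma size_kummer_poly : size kummer_poly = q.+1.
Proof. exact: size_XnsubC. Qed.

Lemma map_kummer_poly : map_poly val kummer_poly = 'X^q - (β ^+ q)%:P.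
Proof. by rewrite rmorphB [X in X - _]map_polyXn [X in _ - X]map_polyC. Qed.

Lemma peval_kummer_poly x : peval x kummer_poly = x ^+ q - β ^+ q.
Proof. by rewrite /peval map_kummer_poly !hornerE. Qed.

Lemma kummer_poly_factor :
  map_poly val kummer_poly = \prod_(i <- iota 0 q) ('X - (ζ ^+ i * β)%:P).
Proof.
rewrite map_kummer_poly -(big_map (fun i => ζ ^+ i * β) predT (fun w => 'X - w%:P)).
rewrite [LHS](@all_roots_prod_XsubC _ _ [seq ζ ^+ i * β | i <- iota 0 q]).
- by rewrite (monicP (monicXnsubC _ q_gt0)) scale1r.
- by rewrite size_XnsubC // size_map size_iota.
- apply/allP => _ /mapP[i _ ->]; rewrite rootE !hornerE exprMn -exprM mulnC exprM.
  by rewrite (prim_expr_order ζ_prim) expr1n mul1r subrr.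
- rewrite uniq_rootsE map_inj_in_uniq ?iota_uniq // => i k.
  rewrite !mem_iota !add0n => ltiq ltkq /(mulIf kummer_root_neq0) /eqP.
  by rewrite (eq_prim_root_expr ζ_prim) !modn_small // => /eqP.
Qed.

Lemma kummer_factor_expr d (s : seq nat) :
  map_poly val d %= \prod_(i <- s) ('X - (ζ ^+ i * β)%:P) -> E (β ^+ size s).
Proof.
move=> d_eqp; have [E0 E1 EB EM EV] := HE.
have EX y m : E y -> E (y ^+ m) by apply: mul_subgroupX; apply: subfield_mul_subgroup.
have P_monic : \prod_(i <- s) ('X - (ζ ^+ i * β)%:P) \is monic.
  exact: monic_prod_XsubC.
have lead_neq0 : lead_coef (map_poly val d) != 0.
  rewrite lead_coef_eq0; apply: contraTneq d_eqp => ->.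
  by rewrite eqp_sym eqp0 (negPf (monic_neq0 P_monic)).
have Z_neq0 : \prod_(i <- s) - ζ ^+ i != 0.
  rewrite prodf_seq_neq0; apply/allP => i _ /=.
  by rewrite oppr_eq0 expf_neq0 // (prim_root_eq0 ζ_prim) -lt0n.
have := congr1 (horner^~ 0) (eqp_eq d_eqp).
rewrite (monicP P_monic) scale1r hornerZ horner_coef0 coef_map horner_prod.
under eq_bigr => i _ do rewrite hornerXsubC sub0r -mulNr.
rewrite big_split big_const_seq count_predT iter_mulr_1 => d0E.
have -> : β ^+ size s = val d`_0 / (lead_coef (map_poly val d) * \prod_(i <- s) - ζ ^+ i).
  by rewrite d0E mulrA mulrC mulKf // mulf_neq0.
apply: (EM); first exact: subfield_mem.
apply: EV; apply: (EM); first by rewrite lead_coef_map; apply: subfield_mem.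
by apply: big_ind => // i _; rewrite -sub0r; apply: EB => //; apply: EX.
Qed.

Lemma kummer_poly_irreducible : irreducible_poly kummer_poly.
Proof.
split=> [|d size_d_neq1 d_dvd]; first by rewrite size_kummer_poly ltnS.
have := d_dvd; rewrite -(dvdp_map val) kummer_poly_factor => /dvdp_prod_XsubC[m d_eqp].
have size_d : size d = (size (mask m (iota 0 q))).+1.
  by rewrite -(size_map_poly val) (eqp_size d_eqp) size_prod_XsubC.
have /(subfield_expr_dvd HE q_prime Eβ_N Eβq) := kummer_factor_expr d_eqp.
move: size_d_neq1; rewrite size_d eqSS -lt0n => s_gt0 /(dvdn_leq s_gt0) q_le_s.
rewrite -dvdp_size_eqp // size_kummer_poly size_d eqSS eqn_leq q_le_s andbT.
by rewrite -ltnS -size_d -size_kummer_poly dvdp_leq // -size_poly_gt0 size_kummer_poly.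
Qed.

Lemma peval_bezout p :
  ~~ (kummer_poly %| p) -> exists u : {poly F}, peval β u * peval β p = 1.
Proof.
rewrite -(irreducible_poly_coprime _ kummer_poly_irreducible).
case/Bezout_eq1_coprimepP=> [[u v] /= /(congr1 (peval β))].
by rewrite rmorphD !rmorphM /= peval_kummer_poly subrr mulr0 add0r rmorph1; exists v.
Qed.

Lemma kummer_dvdpE p : (kummer_poly %| p) = (peval β p == 0).
Proof.
apply/idP/eqP => [/dvdpP[r ->]|p0].
  by rewrite rmorphM /= peval_kummer_poly subrr mulr0.
apply/negPn/negP => /peval_bezout[u]; rewrite p0 mulr0 => /eqP.
by rewrite eq_sym oner_eq0.
Qed.

Lemma peval_conj p : peval β p = 0 -> peval (ζ * β) p = 0.
Proof.
move/eqP; rewrite -kummer_dvdpE => /dvdpP[r ->].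
by rewrite rmorphM /= peval_kummer_poly exprMn (prim_expr_order ζ_prim) mul1r subrr mulr0.
Qed.

Lemma peval_eq0_small p : (size p <= q)%N -> peval β p = 0 -> p = 0.
Proof.
move=> p_small /eqP; rewrite -kummer_dvdpE => dvd_p; apply/eqP; apply: contraTT p_small.
by move=> /dvdp_leq/(_ dvd_p); rewrite size_kummer_poly ltnNge.
Qed.

Definition adjoin_root x := exists p, x = peval β p.

Lemma adjoin_root_subfield : is_subfield adjoin_root.
Proof.
split; first by exists 0; rewrite rmorph0.
- by exists 1; rewrite rmorph1.
- by move=> _ _ [p ->] [p' ->]; exists (p - p'); rewrite pevalB.
- by move=> _ _ [p ->] [p' ->]; exists (p * p'); rewrite rmorphM.
move=> _ [p ->]; have [->|p_neq0] := eqVneq (peval β p) 0.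
  by exists 0; rewrite invr0 rmorph0.
have /peval_bezout[u up1] : ~~ (kummer_poly %| p) by rewrite kummer_dvdpE.
by exists u; apply: (mulIf p_neq0); rewrite mulVf.
Qed.

Lemma subfield_adjoin_root x : E x -> adjoin_root x.
Proof. by move=> Ex; exists (in_subfield HE Ex)%:P; rewrite pevalC. Qed.

Lemma adjoin_root_root : adjoin_root β.
Proof. by exists 'X; rewrite pevalX. Qed.

Lemma adjoin_root_small x :
  adjoin_root x -> exists2 p : {poly F}, (size p <= q)%N & x = peval β p.
Proof.
case=> p ->; exists (p %% kummer_poly).
  by rewrite -ltnS -size_kummer_poly ltn_modp -size_poly_gt0 size_kummer_poly.
rewrite {1}(divp_eq p kummer_poly) rmorphD rmorphM /=.
by rewrite peval_kummer_poly subrr mulr0 add0r.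
Qed.

Lemma peval_conj_monomial p c : (size p <= q)%N -> E c ->
  peval (ζ * β) p = c * peval β p -> p = lead_coef p *: 'X^((size p).-1).
Proof.
move=> p_small Ec conj_p.
pose ζF := in_subfield HE Eζ; pose cF := in_subfield HE Ec.
have coef_eigen i : (i < q)%N -> p`_i * (ζF ^+ i - cF) = 0.
  move=> lt_iq; have poly0 : \poly_(j < q) (p`_j * (ζF ^+ j - cF)) = 0.
    apply: peval_eq0_small; first exact: size_poly.
    have -> : peval β (\poly_(j < q) (p`_j * (ζF ^+ j - cF))) =
              peval (ζ * β) p - c * peval β p.
      rewrite !(peval_sum _ p_small) (peval_sum _ (size_poly _ _)) mulr_sumr -sumrB.
      apply: eq_bigr => j _; rewrite coef_poly ltn_ord rmorphM rmorphB rmorphXn /=.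
      by rewrite exprMn; ring.
    by rewrite conj_p subrr.
  by have := congr1 (fun r : {poly F} => r`_i) poly0; rewrite /= coef_poly lt_iq coef0.
have [->|p_neq0] := eqVneq p 0; first by rewrite lead_coef0 scale0r.
have lt_kq : ((size p).-1 < q)%N by rewrite prednK ?size_poly_gt0.
have lead_neq0 : p`_(size p).-1 != 0 by rewrite -lead_coefE lead_coef_eq0.
have cE : cF = ζF ^+ (size p).-1.
  by have /eqP := coef_eigen _ lt_kq; rewrite mulf_eq0 (negPf lead_neq0) subr_eq0 => /eqP.
have ζF_prim : q.-primitive_root ζF by rewrite -(fmorph_primitive_root val).
apply/polyP => i; rewrite coefZ coefXn.
have [->|i_neq_k] := eqVneq i (size p).-1; first by rewrite mulr1 lead_coefE.
rewrite mulr0; have [lt_iq|le_qi] := ltnP i q; last first.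
  by rewrite nth_default // (leq_trans p_small).
have /eqP := coef_eigen i lt_iq; rewrite cE mulf_eq0 subr_eq0.
by rewrite (eq_prim_root_expr ζF_prim) !modn_small // (negPf i_neq_k) orbF => /eqP.
Qed.

Hypothesis E_roots : forall n, (0 < n)%N -> exists2 w, E w & n.-primitive_root w.

Lemma kummer_monomial y g n t : adjoin_root y -> y != 0 -> E g -> (0 < n)%N ->
  y ^+ n = g * β ^+ t -> exists2 e, E e & exists k, y = e * β ^+ k.
Proof.
move=> /adjoin_root_small[p p_small ->] y_neq0 Eg n_gt0 yn.
have conj_n : peval (ζ * β) p ^+ n = ζ ^+ t * peval β p ^+ n.
  have /peval_conj : peval β (p ^+ n - (in_subfield HE Eg)%:P * 'X^t) = 0.
    by rewrite pevalB rmorphM !rmorphXn /= pevalC pevalX yn subrr.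
  rewrite pevalB rmorphM !rmorphXn /= pevalC pevalX => /eqP; rewrite subr_eq0 => /eqP ->.
  by rewrite yn exprMn mulrCA.
have nq_gt0 : (0 < n * q)%N by rewrite muln_gt0 n_gt0.
have [w Ew w_prim] := E_roots nq_gt0.
have Ec : E (peval (ζ * β) p / peval β p).
  apply: subfield_unity_root HE Ew w_prim _.
  rewrite exprM expr_div_n conj_n mulfK ?expf_neq0 // -exprM mulnC exprM.
  by rewrite (prim_expr_order ζ_prim) expr1n.
have := peval_conj_monomial p_small Ec (esym (divfK y_neq0 _)) => p_mono.
exists (val (lead_coef p)); first exact: subfield_mem.
by exists (size p).-1; rewrite {1}p_mono -mul_polyC rmorphM rmorphXn /= pevalC pevalX.
Qed.

Variable G : L -> Prop.
Hypotheses (G_subgroup : mul_subgroup G) (G_units : forall x, G x -> E x /\ x != 0).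
Hypotheses (G_pure : pure_in E G) (Gβq : G (β ^+ q)).

Lemma monomial_in_group e s t g : E e -> G g -> e * β ^+ s = g * β ^+ t -> G e.
Proof.
move=> Ee Gg eβs; have [G1 GM GV] := G_subgroup; have [Eg g_neq0] := G_units Gg.
have [_ _ _ EM EV] := HE.
have EX y m : E y -> E (y ^+ m) by apply: mul_subgroupX; apply: subfield_mul_subgroup.
have βq_neq0 : (β ^+ q) ^+ s != 0 by rewrite !expf_neq0 ?kummer_root_neq0.
have γs : (β ^+ q) ^+ s = β ^+ s * β ^+ (s * q.-1).
  by rewrite -exprD -mulnS prednK // -exprM mulnC.
(* The power of β below lies in E, hence is a power of β ^+ q, hence lies in G. *)
have βu : β ^+ (t + s * q.-1) = e * (β ^+ q) ^+ s / g.
  by rewrite γs mulrA eβs exprD; field.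
have /(subfield_expr_dvd HE q_prime Eβ_N Eβq) q_dvd_u : E (β ^+ (t + s * q.-1)).
  by rewrite βu; apply: (EM); [apply: (EM) => //; exact: EX | exact: EV].
have -> : e = g * β ^+ (t + s * q.-1) / (β ^+ q) ^+ s.
  by rewrite βu [g * _]mulrC divfK // mulfK.
apply: (GM); last by apply: GV; apply: mul_subgroupX.
by apply: (GM) => //; rewrite -(divnK q_dvd_u) mulnC exprM; apply: mul_subgroupX.
Qed.

Lemma mul_adjoin_pure : pure_in adjoin_root (mul_adjoin G β).
Proof.
move=> _ y n n_gt0 Ay y_neq0 <- [g [t [Gg yn]]].
have [e Ee [k yE]] := kummer_monomial Ay y_neq0 (G_units Gg).1 n_gt0 yn.
have e_neq0 : e != 0 by apply: contraNneq y_neq0 => e0; rewrite yE e0 mul0r.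
have Gen : G (e ^+ n).
  apply: (monomial_in_group (s := (k * n)%N) (t := t) _ Gg).
    exact: mul_subgroupX (subfield_mul_subgroup HE) Ee.
  by rewrite -yn yE exprMn exprM.
have [w Gw wn] := G_pure n_gt0 Ee e_neq0 (erefl _) Gen.
exists (w * β ^+ k); first by exists w, k.
by rewrite exprMn wn -exprMn -yE.
Qed.

Lemma kummer_extension :
  [/\ is_subfield adjoin_root, forall x, E x -> adjoin_root x,
      forall x, mul_adjoin G β x -> adjoin_root x /\ x != 0,
      mul_subgroup (mul_adjoin G β) & pure_in adjoin_root (mul_adjoin G β)].
Proof.
split; [exact: adjoin_root_subfield | exact: subfield_adjoin_root | | | exact: mul_adjoin_pure].
  move=> x; apply: (mul_adjoin_min (H := fun y => adjoin_root y /\ y != 0)).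
  - exact/subfield_units_subgroup/adjoin_root_subfield.
  - by move=> y /G_units[Ey y_neq0]; split; first exact: subfield_adjoin_root.
  - by split; [exact: adjoin_root_root | exact: kummer_root_neq0].
exact: mul_adjoin_subgroup G_subgroup kummer_root_neq0 q_gt0 Gβq.
Qed.

End Kummer.

Section Tower.
Variables (L : fieldType) (K0 B : L -> Prop).
Hypothesis K0_roots : forall n, (0 < n)%N -> exists2 w, K0 w & n.-primitive_root w.
Hypothesis B_subgroup : mul_subgroup B.
Hypothesis B_torsionfree : forall x n, B x -> (0 < n)%N -> x ^+ n = 1 -> x = 1.

Record pure_pair (E G : L -> Prop) : Prop := PurePair {
  pure_pair_subfield : is_subfield E;
  pure_pair_base : forall x, K0 x -> E x;
  pure_pair_units : forall x, G x -> E x /\ x != 0;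
  pure_pair_subgroup : mul_subgroup G;
  pure_pair_sub : forall x, G x -> B x;
  pure_pair_pure : pure_in E G }.

Definition pure_pair_extension (E G P : L -> Prop) :=
  exists E' G', [/\ pure_pair E' G', forall x, G x -> G' x & forall x, P x -> G' x].

Lemma pure_pair_root E G n β : pure_pair E G -> (0 < n)%N -> B β -> E β ->
  G (β ^+ n) -> G β.
Proof.
case=> _ _ G_units _ GB G_pure n_gt0 Bβ Eβ Gβn.
have [_ βn_neq0] := G_units _ Gβn.
have β_neq0 : β != 0 by apply: contraNneq βn_neq0 => ->; rewrite expr0n gtn_eqF.
have [w Gw wn] := G_pure _ β n n_gt0 Eβ β_neq0 (erefl _) Gβn.
have [_ w_neq0] := G_units _ Gw; have [_ BM BV] := B_subgroup.
suff /(canRL (divfK w_neq0)) : β / w = 1 by rewrite mul1r => ->.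
apply: (B_torsionfree _ n_gt0); first by apply: BM => //; apply/BV/GB.
by rewrite expr_div_n wn divff // expf_neq0.
Qed.

Lemma pure_pair_adjoin_prime E G q β : pure_pair E G -> prime q -> B β ->
  G (β ^+ q) -> pure_pair_extension E G (eq β).
Proof.
move=> EG q_prime Bβ Gβq; have q_gt0 := prime_gt0 q_prime.
have [Gβ|Gβ_N] := pselect (G β); first by exists E, G; split => // _ <-.
have Eβ_N : ~ E β by move/(pure_pair_root EG q_gt0 Bβ)/(_ Gβq).
case: EG => HE K0E G_units HG GB G_pure.
have [Eβq _] := G_units _ Gβq.
have [ζ K0ζ ζ_prim] := K0_roots q_gt0.
have E_roots n : (0 < n)%N -> exists2 w, E w & n.-primitive_root w.
  by move=> /K0_roots[w K0w w_prim]; exists w => //; apply: K0E.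
have [E'_sub EE' G'_units G'_sub G'_pure] :=
  kummer_extension HE q_prime ζ_prim (K0E _ K0ζ) Eβq Eβ_N E_roots HG G_units G_pure Gβq.
exists (adjoin_root HE β), (mul_adjoin G β); split.
- split => // [x /K0E/EE'//|x].
  by apply: mul_adjoin_min => //; apply: GB.
- by move=> x; apply: mul_adjoin_sub.
- by move=> _ <-; apply: mul_adjoin_root; case: HG.
Qed.

Lemma pure_pair_adjoin E G n β : (0 < n)%N -> pure_pair E G -> B β ->
  G (β ^+ n) -> pure_pair_extension E G (eq β).
Proof.
elim/ltn_ind: n E G => n IH E G n_gt0 EG Bβ Gβn.
have [n_le1|n_gt1] := leqP n 1.
  have n1 : n = 1%N by apply/eqP; rewrite eqn_leq n_le1.
  by exists E, G; split => // _ <-; rewrite -(expr1 β) -n1.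
have [m nE] := dvdnP (pdiv_dvd n); have p_prime := pdiv_prime n_gt1.
have m_gt0 : (0 < m)%N by move: n_gt0; rewrite nE muln_gt0 => /andP[].
have lt_mn : (m < n)%N by rewrite nE ltn_Pmulr // prime_gt1.
have Gβmp : G ((β ^+ m) ^+ pdiv n) by rewrite -exprM -nE.
have [E1 [G1 [EG1 GG1 βmG1]]] :=
  pure_pair_adjoin_prime EG p_prime (mul_subgroupX m B_subgroup Bβ) Gβmp.
have [E2 [G2 [EG2 G1G2 βG2]]] := IH m lt_mn E1 G1 m_gt0 EG1 Bβ (βmG1 _ erefl).
by exists E2, G2; split => // x /GG1/G1G2.
Qed.

Lemma pure_pair_adjoin_seq E G n (s : seq L) : (0 < n)%N -> pure_pair E G ->
  (forall β, β \in s -> B β /\ G (β ^+ n)) ->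
  pure_pair_extension E G (fun x => x \in s).
Proof.
elim: s E G => [|β s IH] E G n_gt0 EG sBG; first by exists E, G.
have [Bβ Gβn] := sBG β (mem_head _ _).
have [E1 [G1 [EG1 GG1 βG1]]] := pure_pair_adjoin n_gt0 EG Bβ Gβn.
have [x xs|E2 [G2 [EG2 G1G2 sG2]]] := IH E1 G1 n_gt0 EG1.
  have /sBG[Bx Gx] : x \in β :: s by rewrite inE xs orbT.
  by split; last exact: GG1.
exists E2, G2; split => // [x /GG1/G1G2 //|x].
by rewrite inE => /orP[/eqP->|/sG2//]; apply/G1G2/βG1.
Qed.

End Tower.

Section GeneratedSubgroups.
Local Open Scope classical_set_scope.
Variables (K L : fieldType) (j : {rmorphism K -> L}) (r : nat).
Variables (a : 'I_r -> K) (b : 'I_r -> L).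

Lemma pure_pair_image :
  (forall i, a i != 0) -> pure_in setT (in_mgroup a) ->
  (forall x, in_mgroup a x -> in_mgroup b (j x)) ->
  pure_pair (range j) (in_mgroup b) (range j) (j @` in_mgroup a).
Proof.
move=> a_neq0 a_pure sub_ab; split => //.
- exact: range_subfield.
- by move=> _ [y ay <-]; split; [exists y | rewrite fmorph_eq0 (in_mgroup_neq0 a_neq0)].
- exact/image_mul_subgroup/in_mgroup_subgroup.
- by move=> _ [y ay <-]; apply: sub_ab.
- exact: image_pure.
Qed.

Lemma simple_in_adjoin E G : (forall i, b i != 0) -> mult_indep b ->
  pure_pair (range j) (in_mgroup b) E G -> (forall i, G (b i)) ->
  simple_in (adjoin j b) b.
Proof.
move=> b_neq0 b_indep [HE jE G_units HG GB G_pure] bG.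
split=> // [i|x y n n_gt0 Ay y_neq0 yn bx]; first by split; [move=> S _ _; apply | exact: b_neq0].
have Ey : E y by apply: Ay => // [k|i]; [apply: jE; exists k | exact: (G_units _ (bG i)).1].
have [z Gz zn] := G_pure x y n n_gt0 Ey y_neq0 yn (in_mgroup_min HG bG bx).
by exists z => //; apply: GB.
Qed.

End GeneratedSubgroups.

Theorem lemma2p16 (K : fieldType) (iota : {rmorphism K -> CC})
    (Hroots : forall n : nat, (0 < n)%N -> exists z : K, n.-primitive_root z)
    (L : fieldType) (j : {rmorphism K -> L})
    (r : nat) (a : 'I_r -> K) (b : 'I_r -> L)
    (Ha : simple_in (fun _ : K => True) a)
    (Hb0 : forall i, b i != 0)
    (Hsub : forall x : K, in_mgroup a x -> in_mgroup b (j x)) :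
  simple_in (adjoin j b) b.
Proof.
have [a_units a_indep a_pure] := Ha.
have a_neq0 i : a i != 0 := (a_units i).2.
have [M jaM] := in_mgroup_image_matrix Hsub.
have b_indep := mult_indep_image Hb0 a_indep jaM.
have K_roots n : (0 < n)%N -> exists2 w, range j w & n.-primitive_root w.
  by move=> /Hroots[z z_prim]; exists (j z); [exists z | rewrite fmorph_primitive_root].
have det_gt0 : (0 < `|\det M|)%N by rewrite absz_gt0 (det_matrix_neq0 Hb0 a_indep jaM).
have [|E [G [EG _ bG]]] := pure_pair_adjoin_seq K_roots (in_mgroup_subgroup Hb0)
  (fun _ _ => in_mgroup_torsionfree b_indep) det_gt0 (pure_pair_image a_neq0 a_pure Hsub)
  (s := codom b).
  by move=> _ /codomP[i ->]; split; [exact: in_mgroup_gen | exact: expr_det_in_image].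
exact: simple_in_adjoin Hb0 b_indep EG (fun i => bG _ (codom_f b i)).
Qed.
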